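(* Let $X=(X_1,\dots,X_p)$ be a jointly continuous random vector in $\mathbb{R}^p$, and let $a_1,\dots,a_{\mathcal{R}}\in\mathbb{C}$ be such that the set $\mathcal{S}'=\{|a_k|^2:k\in[\mathcal{R}]\}\cup\{a_k^Ha_\ell+a_ka_\ell^H:1\le k<\ell\le\mathcal{R}\}$ is rationally independent. Let $\mathcal{L}=\mathcal{S}_1\cup\mathcal{S}_2\cup\mathcal{S}_3$ (viewed as a family of reals), where $\mathcal{S}_1=\{X_i^2|a_k|^2:i\in[p],k\in[\mathcal{R}]\}$, $\mathcal{S}_2=\{X_iX_j|a_k|^2:1\le i<j\le p,k\in[\mathcal{R}]\}$, $\mathcal{S}_3=\{X_iX_j(a_k^Ha_\ell+a_ka_\ell^H):1\le i<j\le p,1\le k<\ell\le\mathcal{R}\}$. Then $\mathbb{P}(\mathcal{L}\text{ is rationally independent})=1$, where the probability is over the joint distribution of $X_1,\dots,X_p$.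
   Context: $x^H$ denotes the complex conjugate of $x\in\mathbb{C}$, so $a_k^Ha_\ell+a_ka_\ell^H\in\mathbb{R}$. A random vector in $\mathbb{R}^p$ is jointly continuous if it has a joint density with respect to Lebesgue measure. A finite family of reals $(x_k)$ is rationally independent if $\sum_kq_kx_k=0$ with $q_k\in\mathbb{Q}$ implies all $q_k=0$. *)

From HB Require Import structures.
From mathcomp Require Import all_boot all_order all_algebra.
From mathcomp Require Import all_classical all_reals all_analysis.
From mathcomp Require Import measurable_realfun complex.

Set Implicit Arguments.
Unset Strict Implicit.
Unset Printing Implicit Defensive.

Import Order.TTheory GRing.Theory Num.Theory.
Local Open Scope classical_set_scope.
Local Open Scope ring_scope.

Definition rat_indep (R : realType) (I : finType) (P : pred I) (x : I -> R) :=
  forall q : I -> rat,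
    \sum_(i | P i) ratr (q i) * x i = 0 -> forall i, P i -> q i = 0.

Fixpoint iter_leb_int (R : realType) (n : nat) :
    (n.-tuple R -> \bar R) -> \bar R :=
  match n with
  | 0 => fun g => g [tuple]
  | m.+1 => fun g =>
      (\int[@lebesgue_measure R]_(x in [set: R])
         iter_leb_int (fun t : m.-tuple R => g [tuple of x :: t]))%E
  end.

Definition jointly_continuous (R : realType) (d : measure_display)
    (T : measurableType d) (P : probability T R) (p : nat)
    (X : T -> p.-tuple R) :=
  measurable_fun [set: T] X /\
  exists f : p.-tuple R -> \bar R,
    measurable_fun [set: p.-tuple R] f /\ (forall t, (0 <= f t)%E) /\
    forall B : set (p.-tuple R), measurable B ->
      P (X @^-1` B) = iter_leb_int (fun t => ((\1_B t)%:E * f t)%E).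

Definition csq (R : realType) (a : R[i]) : R := complex.Re (a * a^*)%C.
Definition cmix (R : realType) (a b : R[i]) : R :=
  complex.Re ((a^*)%C * b + a * (b^*)%C).

Definition Sprime_idx (r : nat) (s : 'I_r + ('I_r * 'I_r)) : bool :=
  match s with inl _ => true | inr kl => (kl.1 < kl.2)%N end.
Definition Sprime (R : realType) (r : nat) (a : 'I_r -> R[i])
    (s : 'I_r + ('I_r * 'I_r)) : R :=
  match s with inl k => csq (a k) | inr kl => cmix (a kl.1) (a kl.2) end.

Definition L_index (p r : nat) :=
  (('I_p * 'I_r) + (('I_p * 'I_p * 'I_r) + ('I_p * 'I_p * ('I_r * 'I_r))))%type.
Definition L_idx (p r : nat) (s : L_index p r) : bool :=
  match s with
  | inl _ => true
  | inr (inl (i, j, _)) => (i < j)%N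
  | inr (inr (i, j, (k, l))) => (i < j)%N && (k < l)%N
  end.
Definition L_fam (R : realType) (p r : nat) (a : 'I_r -> R[i])
    (x : p.-tuple R) (s : L_index p r) : R :=
  match s with
  | inl (i, k) => tnth x i ^+ 2 * csq (a k)
  | inr (inl (i, j, k)) => tnth x i * tnth x j * csq (a k)
  | inr (inr (i, j, (k, l))) => tnth x i * tnth x j * cmix (a k) (a l)
  end.

From HB Require Import structures.
From mathcomp Require Import all_boot all_order all_algebra.
From mathcomp Require Import all_classical all_reals all_analysis.
From mathcomp Require Import measurable_realfun complex polyrcf.

(* For a nonzero rational coefficient vector q, Q_q(x) = sum_s q_s L_s(x) is a
   quadratic form in x whose coefficient of x_i^2, resp. x_i x_j (i < j), is a
   rational combination of the elements of S'.  If Q_q vanished identically,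
   evaluating it at e_i and e_i + e_j would make these combinations vanish,
   hence q = 0 by the independence of S'.  So the zero set of Q_q is the zero
   set of a nonzero polynomial, which is Lebesgue-null (induction on the
   dimension: a nonzero univariate polynomial has finitely many roots), and it
   has probability 0 because X has a density.  L fails to be rationally
   independent exactly on the countable union of these null sets. *)

Set Implicit Arguments.
Unset Strict Implicit.
Unset Printing Implicit Defensive.
Import Order.TTheory GRing.Theory Num.Theory.
Local Open Scope classical_set_scope.
Local Open Scope ring_scope.

Lemma finite_poly_roots (R : rcfType) (q : {poly R}) :
  q != 0 -> finite_set [set x | q.[x] = 0].
Proof.
move=> q0; apply: sub_finite_set (finite_seq (rootsR q)) => x /eqP qx /=.
by rewrite -(roots_on_rootsR q0) in_itv /= rootE qx.
Qed.

Lemma negligible_bigcup_countable d (T : measurableType d) (R : realFieldType)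
    (mu : {measure set T -> \bar R}) (U : countType) (F : U -> set T) :
  (forall u, mu.-negligible (F u)) -> mu.-negligible (\bigcup_u F u).
Proof.
move=> Fnull; rewrite (_ : \bigcup_u F u = \bigcup_n oapp F set0 (unpickle n)).
  apply: negligible_bigcup => n.
  by case: unpickle => [u|]; [exact: Fnull | exact: negligible_set0].
apply/seteqP; split=> [x [u _ Fux]|x [n _]]; last first.
  by case: unpickle => // u; exists u.
by exists (pickle u) => //; rewrite pickleK.
Qed.

Section SeparatelyPolynomial.
Variable R : comNzRingType.

(* f is a polynomial in each coordinate when the other ones are fixed; this is
   weaker than being a polynomial, but it is all the induction on the
   dimension below needs. *)
Fixpoint separately_poly n : (n.-tuple R -> R) -> Prop :=
  match n with
  | 0 => fun _ => True
  | m.+1 => fun f =>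
      (forall t : m.-tuple R, exists q : {poly R},
         forall x, f [tuple of x :: t] = q.[x]) /\
      (forall x, separately_poly (fun t : m.-tuple R => f [tuple of x :: t]))
  end.

Lemma separately_poly_cst n (c : R) : separately_poly (fun _ : n.-tuple R => c).
Proof.
elim: n => [//|n IH] /=; split=> // t.
by exists c%:P => x; rewrite hornerC.
Qed.

Lemma separately_poly_add n (f g : n.-tuple R -> R) :
  separately_poly f -> separately_poly g -> separately_poly (fun t => f t + g t).
Proof.
elim: n f g => [//|n IH] f g /= [fx ft] [gx gt]; split=> [t|x]; last exact: IH.
have [[qf Hf] [qg Hg]] := (fx t, gx t).
by exists (qf + qg) => x; rewrite hornerD Hf Hg.
Qed.

Lemma separately_poly_mul n (f g : n.-tuple R -> R) :
  separately_poly f -> separately_poly g -> separately_poly (fun t => f t * g t).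
Proof.
elim: n f g => [//|n IH] f g /= [fx ft] [gx gt]; split=> [t|x]; last exact: IH.
have [[qf Hf] [qg Hg]] := (fx t, gx t).
by exists (qf * qg) => x; rewrite hornerM Hf Hg.
Qed.

Lemma separately_poly_exp n (f : n.-tuple R -> R) k :
  separately_poly f -> separately_poly (fun t => f t ^+ k).
Proof.
elim: n f => [//|n IH] f /= [fx ft]; split=> [t|x]; last exact: IH.
by have [qf Hf] := fx t; exists (qf ^+ k) => x; rewrite horner_exp Hf.
Qed.

Lemma separately_poly_sum n (I : finType) (P : pred I) (F : I -> n.-tuple R -> R) :
  (forall i, P i -> separately_poly (F i)) ->
  separately_poly (fun t => \sum_(i | P i) F i t).
Proof.
move=> FP; rewrite -fct_sumE.
by apply: big_ind => //; [exact: separately_poly_cst | exact: separately_poly_add].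
Qed.

Lemma separately_poly_nth n i : separately_poly (fun t : n.-tuple R => nth 0 t i).
Proof.
elim: n i => [//|n IH] [|i] /=; split=> [t|x]; try exact: separately_poly_cst.
- by exists 'X => x; rewrite hornerX.
- by exists (nth 0 t i)%:P => x; rewrite hornerC.
- exact: IH.
Qed.

Lemma separately_poly_tnth n (i : 'I_n) :
  separately_poly (fun t : n.-tuple R => tnth t i).
Proof.
rewrite (_ : (fun t => tnth t i) = fun t => nth 0 t i).
  exact: separately_poly_nth.
by apply/funext => t; rewrite (tnth_nth 0).
Qed.

End SeparatelyPolynomial.

Section LebesgueNull.
Variable R : realType.
Local Open Scope ereal_scope.

Lemma measurable_fun_eq0_outside_countable (h : R -> \bar R) (F : set R) :
  countable F -> (forall x, ~ F x -> h x = 0) -> measurable_fun [set: R] h.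
Proof.
move=> cF hF _ B _; rewrite setTI.
have mF A : A `<=` F -> measurable A.
  move=> AF; apply: countable_measurable.
    by move=> t; exact: measurable_set1.
  exact: sub_countable (subset_card_le AF) cF.
have [B0|NB0] := pselect (B 0).
  rewrite -[_ @^-1` _]setCK; apply: measurableC; apply: mF => x /= NBhx.
  by apply: contrapT => Fx; apply: NBhx; rewrite hF.
apply: mF => x /= Bhx; apply: contrapT => Fx.
by apply: NB0; rewrite -(hF _ Fx).
Qed.

Lemma integral_eq0_outside_countable (h : R -> \bar R) (F : set R) :
  countable F -> (forall x, 0 <= h x) -> (forall x, ~ F x -> h x = 0) ->
  \int[@lebesgue_measure R]_(x in [set: R]) h x = 0.
Proof.
move=> cF h0 hF.
have mF : measurable F.
  by apply: countable_measurable cF => t; exact: measurable_set1.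
rewrite (@ge0_negligible_integral _ _ _ (@lebesgue_measure R) setT F h mF) //.
- by apply: integral0_eq => x [_ /hF].
- exact: measurable_fun_eq0_outside_countable cF hF.
- exact: countable_lebesgue_measure0.
Qed.

Lemma iter_leb_int_ge0 n (g : n.-tuple R -> \bar R) :
  (forall t, 0 <= g t) -> 0 <= iter_leb_int g.
Proof.
elim: n g => [|n IH] g g0 /=; first exact: g0.
by apply: integral_ge0 => x _; exact: IH.
Qed.

Lemma iter_leb_int_poly_roots_eq0 n (f : n.-tuple R -> R) (g : n.-tuple R -> \bar R) :
  separately_poly f -> (exists t, f t != 0%R) -> (forall t, 0 <= g t) ->
  (forall t, f t != 0%R -> g t = 0) -> iter_leb_int g = 0.
Proof.
elim: n f g => [|n IH] f g.
  by move=> _ [t ft] _ gf /=; rewrite -(tuple0 t); exact: gf.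
move=> /= [fx ft] [t0 ft0] g0 gf.
have [q Hq] := fx [tuple of behead t0].
have q0 : q != 0%R.
  by apply: contraNneq ft0 => q0; rewrite [t0]tuple_eta Hq q0 horner0.
apply: (integral_eq0_outside_countable (F := [set x | q.[x] = 0%R])).
- exact/finite_set_countable/finite_poly_roots.
- by move=> x; exact: iter_leb_int_ge0.
move=> x /eqP qx; apply: (IH _ _ (ft x)) => [|t|t]; last exact: gf.
  by exists [tuple of behead t0]; rewrite Hq.
exact: g0.
Qed.

End LebesgueNull.

Section JointlyContinuous.
Variables (R : realType) (d : measure_display) (T : measurableType d).
Variables (P : probability T R) (p : nat) (X : T -> p.-tuple R).
Hypothesis XP : jointly_continuous P X.

Lemma jointly_continuous_measurable_preimage (B : set (p.-tuple R)) :
  measurable B -> measurable (X @^-1` B).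
Proof. by move=> mB; rewrite -[_ @^-1` _]setTI; exact: XP.1. Qed.

Lemma jointly_continuous_poly_roots (f : p.-tuple R -> R) :
  measurable_fun [set: p.-tuple R] f -> separately_poly f ->
  (exists t, f t != 0) -> P (X @^-1` (f @^-1` [set 0])) = 0%E.
Proof.
case: XP => _ [g [_ [g0 Pg]]] mf fP f_neq0.
rewrite Pg; last by rewrite -[_ @^-1` _]setTI; exact: mf.
apply: iter_leb_int_poly_roots_eq0 fP f_neq0 _ _ => t.
  by rewrite mule_ge0 // lee_fin indic_ge0.
by move=> /eqP ft; rewrite indicE memNset ?mul0e.
Qed.

End JointlyContinuous.

Section QuadraticForm.
Variables (R : pzSemiRingType) (p : nat) (D : 'I_p -> R) (M : 'I_p -> 'I_p -> R).

Definition quad_form (x : p.-tuple R) : R :=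
  \sum_(i < p) tnth x i ^+ 2 * D i +
  \sum_(i < p) \sum_(j < p | (i < j)%N) tnth x i * tnth x j * M i j.

Let indicator (A : pred 'I_p) : p.-tuple R := [tuple (m \in A)%:R | m < p].

Let quad_form_indicator A :
  quad_form (indicator A) =
  \sum_(i in A) D i + \sum_(i in A) \sum_(j in A | (i < j)%N) M i j.
Proof.
rewrite /quad_form; congr (_ + _); rewrite [RHS]big_mkcond; apply: eq_bigr => i _.
  rewrite tnth_mktuple; case: (i \in A) => /=.
    by rewrite mulr1n expr1n mul1r.
  by rewrite mulr0n expr0n mul0r.
rewrite tnth_mktuple; case: (i \in A) => /=; last first.
  by rewrite big1 // => j _; rewrite mulr0n !mul0r.
rewrite big_mkcondl; apply: eq_bigr => j _; rewrite tnth_mktuple mulr1n mul1r.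
by case: (j \in A) => /=; rewrite ?mulr1n ?mulr0n ?mul1r ?mul0r.
Qed.

Lemma quad_form_eq0 :
  (forall x, quad_form x = 0) ->
  (forall i, D i = 0) /\ (forall i j : 'I_p, (i < j)%N -> M i j = 0).
Proof.
move=> Q0.
have D0 i : D i = 0.
  have := Q0 (indicator (pred1 i)); rewrite quad_form_indicator !big_pred1_eq.
  by rewrite big1 ?addr0 // => j /andP[/eqP -> ]; rewrite ltnn.
split=> // i j ij.
have ji : j \notin [set i]%SET by rewrite inE neq_ltn ij orbT.
have := Q0 (indicator (mem [set j; i]%SET)); rewrite quad_form_indicator.
rewrite big1 ?add0r // !big_setU1 //= !big_set1 /= !big_mkcondr.
by rewrite !big_setU1 //= !big_set1 !ltnn ij ltnNge (ltnW ij) !add0r addr0.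
Qed.
End QuadraticForm.

Section LFamily.
Variables (R : realType) (p r : nat) (a : 'I_r -> R[i]).

Definition Sprime_comb (c : 'I_r + 'I_r * 'I_r -> rat) : R :=
  \sum_(s | Sprime_idx s) ratr (c s) * Sprime a s.

Definition L_comb (q : L_index p r -> rat) (x : p.-tuple R) : R :=
  \sum_(s | L_idx s) ratr (q s) * L_fam a x s.

(* The coefficients of x_i^2 and of x_i x_j in L_comb q x, as combinations of
   the elements of S'. *)
Definition diag_coef (q : L_index p r -> rat) i (s : 'I_r + 'I_r * 'I_r) : rat :=
  if s is inl k then q (inl (i, k)) else 0.

Definition offdiag_coef (q : L_index p r -> rat) i j (s : 'I_r + 'I_r * 'I_r) :
    rat :=
  match s with
  | inl k => q (inr (inl (i, j, k)))
  | inr kl => q (inr (inr (i, j, kl)))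
  end.

(* Finite functions rather than plain functions, so that the type is
   countable. *)
Definition nontrivial_coef :=
  {u : {ffun L_index p r -> rat} | [exists s, L_idx s && (u s != 0)]}.

Lemma Sprime_combE c : Sprime_comb c =
  \sum_(k < r) ratr (c (inl k)) * csq (a k) +
  \sum_(kl : 'I_r * 'I_r | (kl.1 < kl.2)%N)
     ratr (c (inr kl)) * cmix (a kl.1) (a kl.2).
Proof. by rewrite /Sprime_comb big_sumType. Qed.

Lemma L_comb_quad_form q x : L_comb q x =
  quad_form (fun i => Sprime_comb (diag_coef q i))
            (fun i j => Sprime_comb (offdiag_coef q i j)) x.
Proof.
rewrite /L_comb /quad_form big_mkcond !big_sumType /=; congr (_ + _).
  transitivity (\sum_(i < p) \sum_(k < r)
                  ratr (q (inl (i, k))) * (tnth x i ^+ 2 * csq (a k))).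
    by rewrite pair_bigA; apply: eq_bigr => -[i k].
  apply: eq_bigr => i _; rewrite Sprime_combE [X in _ + X]big1 => [|kl _].
    by rewrite addr0 mulr_sumr; apply: eq_bigr => k _; rewrite mulrCA.
  by rewrite /= rmorph0 mul0r.
under [RHS]eq_bigr => i _ do under eq_bigr => j _ do rewrite Sprime_combE mulrDr.
under [RHS]eq_bigr => i _ do rewrite big_split /=.
rewrite big_split /=; congr (_ + _).
  transitivity (\sum_(i < p) \sum_(j < p) \sum_(k < r)
                  if (i < j)%N then ratr (q (inr (inl (i, j, k)))) *
                    (tnth x i * tnth x j * csq (a k))
                  else 0).
    by rewrite !pair_bigA; apply: eq_bigr => -[[i j] k].
  apply: eq_bigr => i _; rewrite [RHS]big_mkcond; apply: eq_bigr => j _.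
  case: ifP => _; last by rewrite big1.
  by rewrite mulr_sumr; apply: eq_bigr => k _; rewrite mulrCA.
transitivity (\sum_(i < p) \sum_(j < p) \sum_(kl : 'I_r * 'I_r)
                if (i < j)%N && (kl.1 < kl.2)%N then
                  ratr (q (inr (inr (i, j, kl)))) *
                  (tnth x i * tnth x j * cmix (a kl.1) (a kl.2))
                else 0).
  by rewrite !pair_bigA; apply: eq_bigr => -[[i j] [k l]].
apply: eq_bigr => i _; rewrite [RHS]big_mkcond; apply: eq_bigr => j _.
case: ifP => _ /=; last by rewrite big1.
rewrite mulr_sumr [RHS]big_mkcond; apply: eq_bigr => kl _.
by case: ifP; rewrite ?mulr0 // mulrCA.
Qed.

Lemma separately_poly_L_comb q : separately_poly (L_comb q).
Proof.
apply: separately_poly_sum => s _.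
apply: separately_poly_mul; first exact: separately_poly_cst.
case: s => [[i k]|[[[i j] k]|[[i j] [k l]]]] /=;
  (apply: separately_poly_mul; last exact: separately_poly_cst).
- exact/separately_poly_exp/separately_poly_tnth.
- by apply: separately_poly_mul; exact: separately_poly_tnth.
- by apply: separately_poly_mul; exact: separately_poly_tnth.
Qed.

Lemma measurable_L_comb q : measurable_fun [set: p.-tuple R] (L_comb q).
Proof.
rewrite /L_comb; under eq_fun do rewrite big_mkcond.
apply: measurable_sum => s; case: (L_idx s); last exact: measurable_cst.
apply: measurable_funM; first exact: measurable_cst.
case: s => [[i k]|[[[i j] k]|[[i j] [k l]]]] /=;
  (apply: measurable_funM; last exact: measurable_cst).
- by apply: measurable_funX; exact: measurable_tnth.
- by apply: measurable_funM; exact: measurable_tnth.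
- by apply: measurable_funM; exact: measurable_tnth.
Qed.

Hypothesis indep : rat_indep (@Sprime_idx r) (Sprime a).

Lemma L_comb_eq0 q :
  (forall x, L_comb q x = 0) -> forall s, L_idx s -> q s = 0.
Proof.
move=> Lq0.
have [diag0 offdiag0] :
    (forall i, Sprime_comb (diag_coef q i) = 0) /\
    (forall i j : 'I_p, (i < j)%N -> Sprime_comb (offdiag_coef q i j) = 0).
  by apply: quad_form_eq0 => x; rewrite -L_comb_quad_form.
case=> [[i k]|[[[i j] k]|[[i j] [k l]]]] /= Ls.
- exact: (@indep _ (diag0 i) (inl k)).
- exact: (@indep _ (offdiag0 i j Ls) (inl k)).
- by case/andP: Ls => ij kl; exact: (@indep _ (offdiag0 i j ij) (inr (k, l))).
Qed.

Lemma nontrivial_L_comb_neq0 (u : nontrivial_coef) :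
  exists x, L_comb (val u) x != 0.
Proof.
case: u => u /existsP[s /andP[Ls us]] /=.
have [//|all0] := pselect (exists x, L_comb u x != 0).
move/eqP: us; elim; apply: L_comb_eq0 _ s Ls => x.
by apply: contrapT => /eqP ux; apply: all0; exists x.
Qed.

Lemma rat_indep_L_famE x :
  rat_indep (@L_idx p r) (L_fam a x) <->
  forall u : nontrivial_coef, L_comb (val u) x != 0.
Proof.
split=> [Lx [u /= /existsP[s /andP[Ls us]]] | Lx q q0 s Ls].
  by apply: contraNneq us => u0; apply/eqP; exact: Lx _ u0 s Ls.
apply/eqP/negPn/negP => qs.
have nz : [exists s, L_idx s && ([ffun s => q s] s != 0)].
  by apply/existsP; exists s; rewrite ffunE Ls.
have := Lx (exist _ [ffun s => q s] nz); rewrite /L_comb /=.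
by under eq_bigr do rewrite ffunE; rewrite q0 eqxx.
Qed.

End LFamily.

Theorem lemma6 (R : realType) (d : measure_display) (T : measurableType d)
    (P : probability T R) (p r : nat) (X : T -> p.-tuple R)
    (a : 'I_r -> R[i]) :
  jointly_continuous P X ->
  rat_indep (@Sprime_idx r) (Sprime a) ->
  let E := [set w : T | rat_indep (@L_idx p r) (L_fam a (X w))] in
  measurable E /\ P E = 1%E.
Proof.
move=> XP indep E.
pose zeros (u : nontrivial_coef p r) := L_comb a (val u) @^-1` [set 0].
pose N := \bigcup_u X @^-1` zeros u.
have mXzeros u : measurable (X @^-1` zeros u).
  apply: (jointly_continuous_measurable_preimage XP (B := zeros u)).
  by rewrite -[zeros u]setTI; exact: measurable_L_comb.
have mN : measurable N.
  by apply: countable_bigcupT_measurable; first exact: countableP.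
have PN : P N = 0%E.
  apply/(@negligibleP _ _ _ P _ mN); apply: negligible_bigcup_countable => u.
  apply/(@negligibleP _ _ _ P _ (mXzeros u)).
  exact: (jointly_continuous_poly_roots XP (measurable_L_comb a _)
            (separately_poly_L_comb a _) (nontrivial_L_comb_neq0 indep u)).
have -> : E = ~` N.
  apply/seteqP; split=> w; rewrite /E /= rat_indep_L_famE.
    by move=> Lw [u _ /eqP]; apply/negP/Lw.
  by move=> Nw u; apply/eqP => zu; apply: Nw; exists u.
by split; [exact: measurableC | rewrite probability_setC // PN sube0].
Qed.
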